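(* Let $\alpha\ge0$. There is a constant $C>0$ such that for all sufficiently large $k\in\mathbb N$, $$\int_{-\infty}^\infty h_k^2(x)(1+|x|)^\alpha dx\ge Ck^{\alpha/2}\quad\text{and}\quad\int_{-\infty}^\infty h_k^2(x)(1+|x|)^{-\alpha}dx\ge C\max\{k^{-\alpha/2},k^{-1/2}\}.$$
   Context: $h_k(t)=(2^kk!\sqrt\pi)^{-1/2}H_k(t)e^{-t^2/2}$ are the Hermite functions, where $H_k(t)=(-1)^ke^{t^2}\frac{d^k}{dt^k}e^{-t^2}$ are the Hermite polynomials. *)

From Stdlib Require Import Reals Factorial.
From Coquelicot Require Import Coquelicot.
Open Scope R_scope.

Definition hermite_poly (k : nat) (t : R) : R :=
  (-1) ^ k * exp (t ^ 2) * Derive_n (fun x => exp (- x ^ 2)) k t.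

Definition hermite_fun (k : nat) (t : R) : R :=
  / sqrt (2 ^ k * INR (fact k) * sqrt PI) * hermite_poly k t * exp (- t ^ 2 / 2).

From Stdlib Require Import Reals Factorial Lra Lia Classical.
From Coquelicot Require Import Coquelicot.
Open Scope R_scope.

(* The Hermite functions satisfy h_k'' = (x^2 - (2k+1)) h_k and the ladder relation
   (x h_k - h_k')^2 = 2(k+1) h_(k+1)^2.  Integrating derivatives of quadratic expressions
   in (h_k, h_k') that decay at infinity gives, with no Gaussian integral evaluated:
   the mass N = int h_k^2 does not depend on k, int x^2 h_k^2 = (2k+1)/2 N,
   int x^4 h_k^2 = 3((2k+1)^2+1)/8 N, and int 2|x| h_k^2 = 2 E_k(0) for the energy
   E_k = h_k'^2 + (2k+1-x^2) h_k^2, which is maximal at 0.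
   If a weight W is >= W0 where x^2 >= k/2, it dominates the quartic
   (16/49) W0 (x^2 - k/2)(4k - x^2)/k^2, whose integral against h_k^2 is >= (16/49) W0 N
   by the moment identities; with W = (1+|x|)^a this gives the growth k^(a/2), and with
   W = 2|x| it gives E_k(0) >= c sqrt(k) N.  Likewise W0 (1 - x^2/(4k)) gives the bound
   k^(-a/2) for W = (1+|x|)^(-a).  Finally a virial identity bounds E_k(0) by
   (4k + 9/4) int_{-1}^{1} h_k^2, so h_k^2 keeps a mass of order k^(-1/2) on [-1,1],
   where (1+|x|)^(-a) >= 2^(-a). *)

Local Notation minf := (Rbar_locally m_infty).
Local Notation pinf := (Rbar_locally p_infty).
Local Notation gauss := (fun x : R => exp (- x ^ 2)).
Local Notation half_gauss := (fun x : R => exp (- x ^ 2 / 2)).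

Lemma is_derive_eq (f : R -> R) (x d d' : R) : is_derive f x d -> d = d' -> is_derive f x d'.
Proof. now intros ? <-. Qed.

Lemma is_derive_Rplus (f g : R -> R) (x df dg : R) :
  is_derive f x df -> is_derive g x dg -> is_derive (fun t => f t + g t) x (df + dg).
Proof. apply (is_derive_plus f g). Qed.

Lemma is_derive_Rminus (f g : R -> R) (x df dg : R) :
  is_derive f x df -> is_derive g x dg -> is_derive (fun t => f t - g t) x (df - dg).
Proof. apply (is_derive_minus f g). Qed.

Lemma is_derive_Rmult (f g : R -> R) (x df dg : R) :
  is_derive f x df -> is_derive g x dg ->
  is_derive (fun t => f t * g t) x (df * g x + f x * dg).
Proof. intros Hf Hg; exact (is_derive_mult f g x df dg Hf Hg Rmult_comm). Qed.

Lemma is_derive_Rpow (f : R -> R) (n : nat) (x df : R) :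
  is_derive f x df -> is_derive (fun t => f t ^ S n) x (INR (S n) * df * f x ^ n).
Proof. apply (is_derive_pow f (S n)). Qed.

Lemma is_derive_Rid (x : R) : is_derive (fun t => t) x 1.
Proof. apply (@is_derive_id R_AbsRing). Qed.

Lemma is_derive_Rconst (c x : R) : is_derive (fun _ => c) x 0.
Proof. apply (@is_derive_const R_AbsRing). Qed.

Ltac derive_step :=
  match goal with
  | |- is_derive (fun t => @?f t + @?g t) _ _ => apply (is_derive_Rplus f g)
  | |- is_derive (fun t => @?f t - @?g t) _ _ => apply (is_derive_Rminus f g)
  | |- is_derive (fun t => @?f t * @?g t) _ _ => apply (is_derive_Rmult f g)
  | |- is_derive (fun t => @?f t ^ S ?n) _ _ => apply (is_derive_Rpow f n)
  | |- is_derive (fun t => t) _ _ => exact (is_derive_Rid _)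
  end.

(* [known] differentiates the named functions; it must run before the constant
   case, since Ltac also matches [fun t => ?c] against an eta-reduced [herm k]. *)
Ltac derive_tac known :=
  eapply is_derive_eq;
    [repeat first
       [ derive_step | known
       | match goal with |- is_derive (fun t => ?c) _ _ => exact (is_derive_Rconst c _) end ]
    |].

(** * Improper integrals over the real line *)

Lemma is_lim_inv_sq (B : R) (l : Rbar) :
  l = p_infty \/ l = m_infty -> is_lim (fun t => B / (1 + t ^ 2)) l 0.
Proof.
  intro Hl.
  assert (H : is_lim (fun t => 1 + t ^ 2) l p_infty).
  { apply (is_lim_ext (fun t => 1 + t * t)); [intro; ring|].
    apply (is_lim_plus _ _ _ 1 p_infty p_infty); [apply is_lim_const| |easy].
    destruct Hl as [-> | ->].
    - apply (is_lim_mult _ _ _ p_infty p_infty); try apply is_lim_id; easy.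
    - apply (is_lim_mult _ _ _ m_infty m_infty); try apply is_lim_id; easy. }
  replace (Finite 0) with (Rbar_mult B 0) by (simpl; f_equal; ring).
  apply (is_lim_scal_l (fun t => / (1 + t ^ 2)) B l 0).
  apply (is_lim_inv _ _ _ H); easy.
Qed.

Lemma filterlim_inv_sq_bound (B : R) (f : R -> R) (l : Rbar) :
  l = p_infty \/ l = m_infty -> (forall x, Rabs (f x) <= B / (1 + x ^ 2)) ->
  filterlim f (Rbar_locally l) (locally 0).
Proof.
  intros Hl Hf.
  apply (filterlim_le_le (fun x => - B / (1 + x ^ 2)) f (fun x => B / (1 + x ^ 2)) 0).
  - apply filter_forall; intro x; rewrite Rdiv_opp_l; apply Rabs_le_between, Hf.
  all: destruct Hl as [-> | ->];
    [apply (is_lim_inv_sq _ p_infty) | apply (is_lim_inv_sq _ m_infty)]; auto.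
Qed.

Lemma filterlim_at_point (f : R -> R) (a : R) : filterlim f (at_point a) (locally (f a)).
Proof. intros P HP; exact (locally_singleton _ _ HP). Qed.

Lemma is_RInt_gen_derive (F f : R -> R) {Fa Fb : (R -> Prop) -> Prop}
  {FFa : Filter Fa} {FFb : Filter Fb} (la lb : R) :
  (forall x, is_derive F x (f x)) -> (forall x, continuous f x) ->
  filterlim F Fa (locally la) -> filterlim F Fb (locally lb) ->
  is_RInt_gen f Fa Fb (lb - la).
Proof.
  intros HF Hf Ha Hb.
  assert (HD : forall x, Derive F x = f x) by (intro; apply is_derive_unique, HF).
  apply (is_RInt_gen_ext (Derive F)); [apply filter_forall; intros ab x _; apply HD|].
  apply is_RInt_gen_Derive; auto; apply filter_forall; intros ab x _.
  - eexists; apply HF.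
  - apply (continuous_ext f); [intro; symmetry; apply HD | apply Hf].
Qed.

Lemma filter_prod_minf_pinf (P : R * R -> Prop) (c d : R) :
  (forall a b, a < c -> d < b -> P (a, b)) -> filter_prod minf pinf P.
Proof.
  intro H; apply (Filter_prod _ _ _ (fun a => a < c) (fun b => d < b)); auto;
    [exists c | exists d]; auto.
Qed.

Lemma is_RInt_gen_lower_bound (f : R -> R) (l m : R) :
  is_RInt_gen f minf pinf l ->
  filter_prod minf pinf (fun ab => forall y, is_RInt f (fst ab) (snd ab) y -> m <= y) ->
  m <= l.
Proof.
  intros Hl Hm; apply Rnot_lt_le; intro Hlt.
  assert (He : 0 < m - l) by lra.
  assert (Hball := Hl _ (locally_ball l (mkposreal _ He))); unfold filtermapi in Hball.
  assert (Hp : ProperFilter (filter_prod minf pinf))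
    by (apply filter_prod_proper; apply Rbar_locally_filter).
  destruct (filter_ex _ (filter_and _ _ Hball Hm)) as [ab [[y [Hy Hyl]] Hmy]].
  specialize (Hmy y Hy); change (Rabs (y - l) < m - l) in Hyl.
  apply Rabs_def2 in Hyl; lra.
Qed.

Lemma ex_RInt_cont (f : R -> R) (a b : R) : (forall x, continuous f x) -> ex_RInt f a b.
Proof. intro Hf; apply (@ex_RInt_continuous R_CompleteNormedModule); auto. Qed.

Lemma RInt_Rmult (f : R -> R) (c a b : R) :
  ex_RInt f a b -> RInt (fun x => c * f x) a b = c * RInt f a b.
Proof. apply (RInt_scal f a b c). Qed.

Lemma RInt_le_superinterval (f : R -> R) (a c d b : R) :
  (forall x, continuous f x) -> (forall x, 0 <= f x) -> a <= c -> c <= d -> d <= b ->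
  RInt f c d <= RInt f a b.
Proof.
  intros Hc Hf Hac Hcd Hdb.
  rewrite <- (RInt_Chasles f a c b), <- (RInt_Chasles f c d b) by apply ex_RInt_cont, Hc.
  assert (0 <= RInt f a c) by (apply RInt_ge_0; [lra | apply ex_RInt_cont, Hc | auto]).
  assert (0 <= RInt f d b) by (apply RInt_ge_0; [lra | apply ex_RInt_cont, Hc | auto]).
  change plus with Rplus; lra.
Qed.

Lemma RInt_le_is_RInt_gen (f : R -> R) (l c d : R) :
  is_RInt_gen f minf pinf l -> (forall x, 0 <= f x) -> (forall x, continuous f x) ->
  c <= d -> RInt f c d <= l.
Proof.
  intros Hl Hf Hc Hcd; apply (is_RInt_gen_lower_bound f); auto.
  apply (filter_prod_minf_pinf _ c d); intros a b Ha Hb y Hy; simpl in Hy.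
  rewrite <- (is_RInt_unique _ _ _ _ Hy); apply RInt_le_superinterval; auto; lra.
Qed.

Lemma is_RInt_gen_ge0 (f : R -> R) (l : R) :
  is_RInt_gen f minf pinf l -> (forall x, 0 <= f x) -> 0 <= l.
Proof.
  intros Hl Hf; apply (is_RInt_gen_lower_bound f); auto.
  apply (filter_prod_minf_pinf _ 0 0); intros a b Ha Hb y Hy; simpl in Hy.
  rewrite <- (is_RInt_unique _ _ _ _ Hy); apply RInt_ge_0; [lra | eexists; eauto | auto].
Qed.

Lemma is_RInt_gen_le (f g : R -> R) (lf lg : R) :
  is_RInt_gen f minf pinf lf -> is_RInt_gen g minf pinf lg ->
  (forall x, f x <= g x) -> lf <= lg.
Proof.
  intros Hf Hg Hfg.
  apply Rminus_le_0, (is_RInt_gen_ge0 (fun x => g x - f x)); [|intro x; specialize (Hfg x); lra].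
  apply (is_RInt_gen_minus g f); auto.
Qed.

Lemma is_RInt_gen_lin (f g : R -> R) (a b lf lg : R) :
  is_RInt_gen f minf pinf lf -> is_RInt_gen g minf pinf lg ->
  is_RInt_gen (fun x => a * f x + b * g x) minf pinf (a * lf + b * lg).
Proof.
  intros Hf Hg; apply (is_RInt_gen_plus (fun x => a * f x) (fun x => b * g x));
    [apply (is_RInt_gen_scal f a lf) | apply (is_RInt_gen_scal g b lg)]; auto.
Qed.

Lemma is_RInt_gen_uniq (f : R -> R) (l1 l2 : R) :
  is_RInt_gen f minf pinf l1 -> is_RInt_gen f minf pinf l2 -> l1 = l2.
Proof. intros H1 H2; now rewrite <- (is_RInt_gen_unique f l1 H1), (is_RInt_gen_unique f l2 H2). Qed.

Lemma RInt_le_inv_sq_bound (f : R -> R) (B a b : R) :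
  (forall x, continuous f x) -> (forall x, f x <= B / (1 + x ^ 2)) -> 0 <= B -> a <= b ->
  RInt f a b <= B * PI.
Proof.
  intros Hc Hf HB Hab.
  assert (Hpos : forall x, 0 < 1 + x ^ 2) by (intro x; nra).
  assert (Hat : is_RInt (fun x => B / (1 + x ^ 2)) a b (B * atan b - B * atan a)).
  { apply (is_RInt_derive (fun x => B * atan x)); intros x _.
    - apply (is_derive_ext (fun x => B * atan x)); [reflexivity|].
      auto_derive; [easy | field; specialize (Hpos x); simpl in *; lra].
    - apply (ex_derive_continuous (fun x => B / (1 + x ^ 2))).
      auto_derive; specialize (Hpos x); simpl in *; lra. }
  eapply Rle_trans; [apply (RInt_le f (fun x => B / (1 + x ^ 2))); auto|].
  - apply ex_RInt_cont, Hc.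
  - eexists; exact Hat.
  - rewrite (is_RInt_unique _ _ _ _ Hat).
    pose proof (atan_bound a); pose proof (atan_bound b); nra.
Qed.

Lemma is_RInt_gen_inv_sq_bound (f : R -> R) (B : R) :
  (forall x, continuous f x) -> (forall x, 0 <= f x <= B / (1 + x ^ 2)) ->
  is_RInt_gen f minf pinf (RInt_gen f minf pinf).
Proof.
  intros Hc Hf.
  assert (HB : 0 <= B) by (destruct (Hf 0) as [H0 H1]; simpl in H1; lra).
  set (E := fun y => exists a b, a <= b /\ y = RInt f a b).
  destruct (completeness E) as [l [Hub Hlub]].
  - exists (B * PI); intros y [a [b [Hab ->]]].
    apply (RInt_le_inv_sq_bound f B); auto; apply Hf.
  - exists (RInt f 0 0), 0, 0; split; [lra | reflexivity].
  - enough (Hl : is_RInt_gen f minf pinf l) by (now rewrite (is_RInt_gen_unique f l Hl)).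
    intros P [[eps Heps] HP]; simpl in HP.
    assert (Happrox : exists a0 b0, a0 <= b0 /\ l - eps < RInt f a0 b0).
    { apply NNPP; intro Hno.
      assert (l <= l - eps); [|lra].
      apply Hlub; intros y [a [b [Hab ->]]]; apply Rnot_lt_le; intro; apply Hno; eauto. }
    destruct Happrox as [a0 [b0 [Hab0 Hgt]]].
    apply (filter_prod_minf_pinf _ a0 b0); intros a b Ha Hb.
    exists (RInt f a b); split; [apply (@RInt_correct R_CompleteNormedModule), ex_RInt_cont, Hc|].
    apply HP; change (Rabs (RInt f a b - l) < eps).
    assert (RInt f a b <= l) by (apply Hub; exists a, b; split; [lra | reflexivity]).
    assert (RInt f a0 b0 <= RInt f a b) by (apply RInt_le_superinterval; auto; [apply Hf | lra..]).
    apply Rabs_def1; lra.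
Qed.

(** * Polynomially weighted bounds *)

Definition poly_dominated (w f : R -> R) : Prop :=
  exists A m, 0 <= A /\ forall x, Rabs (f x) <= A * (1 + Rabs x) ^ m * w x.

Lemma one_le_1_abs (x : R) : 1 <= 1 + Rabs x.
Proof. pose proof (Rabs_pos x); lra. Qed.

Lemma poly_dominated_ext (w f f' : R -> R) :
  (forall x, f x = f' x) -> poly_dominated w f -> poly_dominated w f'.
Proof. intros Hf [A [m [HA H]]]; exists A, m; split; auto; intro; rewrite <- Hf; auto. Qed.

Lemma poly_dominated_weight_ext (w w' f : R -> R) :
  (forall x, w x = w' x) -> poly_dominated w f -> poly_dominated w' f.
Proof. intros Hw [A [m [HA H]]]; exists A, m; split; auto; intro; rewrite <- Hw; auto. Qed.

Lemma poly_dominated_plus (w f g : R -> R) : (forall x, 0 <= w x) ->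
  poly_dominated w f -> poly_dominated w g -> poly_dominated w (fun x => f x + g x).
Proof.
  intros Hw [A [m [HA Hf]]] [A' [m' [HA' Hg]]]; exists (A + A'), (m + m')%nat; split; [lra|].
  intro x; eapply Rle_trans; [apply Rabs_triang|].
  assert (Hm : (1 + Rabs x) ^ m <= (1 + Rabs x) ^ (m + m'))
    by (apply Rle_pow; [apply one_le_1_abs | lia]).
  assert (Hm' : (1 + Rabs x) ^ m' <= (1 + Rabs x) ^ (m + m'))
    by (apply Rle_pow; [apply one_le_1_abs | lia]).
  specialize (Hf x); specialize (Hg x); specialize (Hw x).
  assert (A * (1 + Rabs x) ^ m * w x <= A * (1 + Rabs x) ^ (m + m') * w x)
    by (apply Rmult_le_compat_r, Rmult_le_compat_l; auto).
  assert (A' * (1 + Rabs x) ^ m' * w x <= A' * (1 + Rabs x) ^ (m + m') * w x)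
    by (apply Rmult_le_compat_r, Rmult_le_compat_l; auto).
  lra.
Qed.

Lemma poly_dominated_minus (w f g : R -> R) : (forall x, 0 <= w x) ->
  poly_dominated w f -> poly_dominated w g -> poly_dominated w (fun x => f x - g x).
Proof.
  intros Hw Hf [A [m [HA Hg]]]; apply poly_dominated_plus; auto.
  exists A, m; split; auto; intro x; rewrite Rabs_Ropp; apply Hg.
Qed.

Lemma poly_dominated_mult (w1 w2 f g : R -> R) :
  poly_dominated w1 f -> poly_dominated w2 g ->
  poly_dominated (fun x => w1 x * w2 x) (fun x => f x * g x).
Proof.
  intros [A [m [HA Hf]]] [A' [m' [HA' Hg]]]; exists (A * A'), (m + m')%nat; split; [nra|].
  intro x; rewrite Rabs_mult, pow_add.
  replace (A * A' * ((1 + Rabs x) ^ m * (1 + Rabs x) ^ m') * (w1 x * w2 x))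
    with ((A * (1 + Rabs x) ^ m * w1 x) * (A' * (1 + Rabs x) ^ m' * w2 x)) by ring.
  apply Rmult_le_compat; auto; apply Rabs_pos.
Qed.

Lemma poly_dominated_mult_poly (w p f : R -> R) :
  poly_dominated (fun _ => 1) p -> poly_dominated w f -> poly_dominated w (fun x => p x * f x).
Proof.
  intros Hp Hf; apply (poly_dominated_weight_ext (fun x => 1 * w x)); [intro; ring|].
  now apply poly_dominated_mult.
Qed.

Lemma poly_dominated_const (c : R) : poly_dominated (fun _ => 1) (fun _ => c).
Proof. exists (Rabs c), 0%nat; split; [apply Rabs_pos | intro; simpl; lra]. Qed.

Lemma poly_dominated_pow (n : nat) : poly_dominated (fun _ => 1) (fun x => x ^ n).
Proof.
  exists 1, n; split; [lra|]; intro x; rewrite <- RPow_abs, Rmult_1_l, Rmult_1_r.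
  apply pow_incr; pose proof (Rabs_pos x); lra.
Qed.

Lemma poly_dominated_id : poly_dominated (fun _ => 1) (fun x => x).
Proof.
  apply (poly_dominated_ext _ (fun x => x ^ 1)); [intro; ring | apply poly_dominated_pow].
Qed.

Lemma poly_dominated_Rpower (a : R) :
  poly_dominated (fun _ => 1) (fun x => Rpower (1 + Rabs x) a).
Proof.
  destruct (INR_unbounded a) as [n Hn]; exists 1, n; split; [lra|]; intro x.
  rewrite Rabs_right by (apply Rle_ge, Rlt_le, exp_pos).
  rewrite <- Rpower_pow by (pose proof (one_le_1_abs x); lra).
  rewrite Rmult_1_l, Rmult_1_r; apply Rle_Rpower; [apply one_le_1_abs | lra].
Qed.

Ltac weight_nonneg := intro; first [lra | apply Rlt_le, exp_pos].

(* The left factor of a product is taken to be the polynomially bounded one; [known]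
   plays the same role as in [derive_tac]. *)
Ltac dominated_tac known :=
  repeat first
    [ match goal with
      | |- poly_dominated _ (fun t => @?f t + @?g t) =>
          apply (poly_dominated_plus _ f g); [weight_nonneg | |]
      | |- poly_dominated _ (fun t => @?f t - @?g t) =>
          apply (poly_dominated_minus _ f g); [weight_nonneg | |]
      end
    | known
    | match goal with
      | |- poly_dominated _ (fun t => @?f t * @?g t) => apply (poly_dominated_mult_poly _ f g)
      | |- poly_dominated _ (fun t => t) => exact poly_dominated_id
      | |- poly_dominated _ (fun t => t ^ ?n) => exact (poly_dominated_pow n)
      | |- poly_dominated _ (fun t => ?c) => exact (poly_dominated_const c)
      end ].

Lemma pow_le_fact_exp (y : R) (n : nat) : 0 <= y -> y ^ n <= INR (fact n) * exp y.
Proof.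
  intro Hy; assert (Hf : 0 < INR (fact n)) by apply lt_0_INR, lt_O_fact.
  replace (y ^ n) with (INR (fact n) * (y ^ n / INR (fact n))) by (field; lra).
  apply Rmult_le_compat_l; [lra|].
  eapply Rle_trans; [|apply (exp_ge_taylor y n Hy)].
  destruct n as [|n]; [simpl; lra|].
  rewrite tech5; enough (0 <= sum_f_R0 (fun k => y ^ k / INR (fact k)) n) by lra.
  apply cond_pos_sum; intro k; apply Rmult_le_pos;
    [apply pow_le, Hy | apply Rlt_le, Rinv_0_lt_compat, lt_0_INR, lt_O_fact].
Qed.

(* From 1 + |x| <= 2 (1 + x^2) and (1 + x^2)^(m+1) <= (m+1)! e^(1 + x^2). *)
Lemma poly_gauss_le_inv_sq (m : nat) (x : R) :
  (1 + Rabs x) ^ m * exp (- x ^ 2) <= 2 ^ m * INR (fact (S m)) * exp 1 / (1 + x ^ 2).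
Proof.
  set (y := 1 + x ^ 2).
  assert (Hy : 1 <= y) by (unfold y; nra).
  assert (Hxy : 0 <= 1 + Rabs x <= 2 * y).
  { unfold y; rewrite <- (pow2_abs x); pose proof (Rabs_pos x); split; [lra | nra]. }
  assert (Hpow : (1 + Rabs x) ^ m <= 2 ^ m * y ^ m)
    by (rewrite <- Rpow_mult_distr; apply pow_incr, Hxy).
  assert (Hexp : y ^ S m <= INR (fact (S m)) * (exp 1 * exp (x ^ 2))).
  { replace (exp 1 * exp (x ^ 2)) with (exp y) by (unfold y; apply exp_plus).
    apply pow_le_fact_exp; lra. }
  assert (Hinv : exp (x ^ 2) * exp (- x ^ 2) = 1)
    by (rewrite <- exp_plus, Rplus_opp_r; apply exp_0).
  assert (He : 0 < exp (- x ^ 2)) by apply exp_pos.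
  assert (H2m : 0 < 2 ^ m) by (apply pow_lt; lra).
  assert (Hmain : 2 ^ m * y ^ S m * exp (- x ^ 2) <= 2 ^ m * INR (fact (S m)) * exp 1).
  { replace (2 ^ m * INR (fact (S m)) * exp 1)
      with (2 ^ m * (INR (fact (S m)) * (exp 1 * exp (x ^ 2))) * exp (- x ^ 2))
      by (rewrite <- (Rmult_1_r (2 ^ m * INR (fact (S m)) * exp 1)), <- Hinv; ring).
    apply Rmult_le_compat_r, Rmult_le_compat_l; lra. }
  apply Rle_trans with (2 ^ m * y ^ m * exp (- x ^ 2)); [apply Rmult_le_compat_r; lra|].
  replace (2 ^ m * y ^ m * exp (- x ^ 2)) with (2 ^ m * y ^ S m * exp (- x ^ 2) / y)
    by (simpl; field; lra).
  apply Rmult_le_compat_r; [apply Rlt_le, Rinv_0_lt_compat; lra | exact Hmain].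
Qed.

Lemma poly_dominated_gauss_inv_sq (f : R -> R) :
  poly_dominated gauss f -> exists B, forall x, Rabs (f x) <= B / (1 + x ^ 2).
Proof.
  intros [A [m [HA Hf]]]; exists (A * (2 ^ m * INR (fact (S m)) * exp 1)); intro x.
  eapply Rle_trans; [apply Hf|]; unfold Rdiv; rewrite !Rmult_assoc.
  apply Rmult_le_compat_l; [exact HA|]; rewrite <- !Rmult_assoc; apply poly_gauss_le_inv_sq.
Qed.

Lemma is_RInt_gen_derive_gauss (G f : R -> R) :
  (forall x, is_derive G x (f x)) -> (forall x, continuous f x) ->
  poly_dominated gauss G -> is_RInt_gen f minf pinf 0.
Proof.
  intros HG Hf Hdom; destruct (poly_dominated_gauss_inv_sq G Hdom) as [B HB].
  replace 0 with (0 - 0) by ring.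
  apply (is_RInt_gen_derive G f 0 0 HG Hf); apply (filterlim_inv_sq_bound B); auto.
Qed.

Lemma poly_dominated_half_gauss : poly_dominated half_gauss half_gauss.
Proof.
  exists 1, 0%nat; split; [lra|]; intro x.
  rewrite Rabs_right by (apply Rle_ge, Rlt_le, exp_pos); simpl; lra.
Qed.

Lemma poly_dominated_gauss_mult (f g : R -> R) :
  poly_dominated half_gauss f -> poly_dominated half_gauss g ->
  poly_dominated gauss (fun x => f x * g x).
Proof.
  intros Hf Hg; apply (poly_dominated_weight_ext (fun x => exp (- x ^ 2 / 2) * exp (- x ^ 2 / 2)));
    [intro; rewrite <- exp_plus; f_equal; field | now apply poly_dominated_mult].
Qed.

(** * Hermite polynomials *)

Fixpoint herm (k : nat) (x : R) : R :=
  match k with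
  | O => 1
  | S O => 2 * x
  | S (S j as k') => 2 * x * herm k' x - 2 * INR k' * herm j x
  end.

Definition herm_der (k : nat) (x : R) : R :=
  match k with O => 0 | S j => 2 * INR k * herm j x end.

Lemma herm_S (k : nat) (x : R) : herm (S k) x = 2 * x * herm k x - herm_der k x.
Proof. destruct k as [|k]; simpl; ring. Qed.

Lemma is_derive_herm (k : nat) (x : R) : is_derive (herm k) x (herm_der k x).
Proof.
  revert x; enough (H : forall x, is_derive (herm k) x (herm_der k x) /\
                             is_derive (herm (S k)) x (herm_der (S k) x)) by apply H.
  induction k as [|k IH]; intro x; split.
  - apply is_derive_Rconst.
  - apply (is_derive_ext (fun t => 2 * t)); [reflexivity|].
    derive_tac fail; simpl; ring.
  - apply IH.
  - apply (is_derive_ext (fun t => 2 * t * herm (S k) t - 2 * INR (S k) * herm k t));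
      [reflexivity|].
    destruct (IH x) as [IH0 IH1].
    derive_tac ltac:(idtac; match goal with
                     | |- is_derive (fun t => herm k t) _ _ => exact IH0
                     | |- is_derive (fun t => herm (S k) t) _ _ => exact IH1
                     end).
    cbn [herm_der]; rewrite herm_S, !S_INR; ring.
Qed.

Lemma is_derive_herm_der (k : nat) (x : R) :
  is_derive (herm_der k) x (2 * x * herm_der k x - 2 * INR k * herm k x).
Proof.
  destruct k as [|k].
  - eapply is_derive_eq; [apply is_derive_Rconst | simpl; ring].
  - apply (is_derive_ext (fun t => 2 * INR (S k) * herm k t)); [reflexivity|].
    derive_tac ltac:(idtac; match goal with
                     | |- is_derive (fun t => herm k t) _ _ => exact (is_derive_herm k x)
                     end).
    cbn [herm_der]; rewrite herm_S; ring.
Qed.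

Lemma poly_dominated_herm (k : nat) : poly_dominated (fun _ => 1) (herm k).
Proof.
  enough (H : poly_dominated (fun _ => 1) (herm k) /\ poly_dominated (fun _ => 1) (herm (S k)))
    by apply H.
  induction k as [|k [IH0 IH1]]; split; auto.
  - exact (poly_dominated_const 1).
  - apply (poly_dominated_ext _ (fun t => 2 * t)); [reflexivity|].
    dominated_tac fail.
  - apply (poly_dominated_ext _ (fun t => 2 * t * herm (S k) t - 2 * INR (S k) * herm k t));
      [reflexivity|].
    dominated_tac ltac:(idtac; match goal with
                        | |- poly_dominated _ (fun t => herm k t) => exact IH0
                        | |- poly_dominated _ (fun t => herm (S k) t) => exact IH1
                        end).
Qed.

Lemma poly_dominated_herm_der (k : nat) : poly_dominated (fun _ => 1) (herm_der k).
Proof.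
  destruct k as [|k]; [exact (poly_dominated_const 0)|].
  apply (poly_dominated_ext _ (fun t => 2 * INR (S k) * herm k t)); [reflexivity|].
  dominated_tac ltac:(idtac; match goal with
                      | |- poly_dominated _ (fun t => herm k t) => exact (poly_dominated_herm k)
                      end).
Qed.

Lemma is_derive_gauss (x : R) : is_derive (fun t => exp (- t ^ 2)) x (- 2 * x * exp (- x ^ 2)).
Proof. auto_derive; [easy | simpl; ring]. Qed.

Lemma is_derive_half_gauss (x : R) :
  is_derive (fun t => exp (- t ^ 2 / 2)) x (- x * exp (- x ^ 2 / 2)).
Proof.
  eapply is_derive_eq; [auto_derive; [easy | reflexivity]|].
  replace (- (x * (x * 1)) * / 2) with (- x ^ 2 / 2) by (unfold Rdiv; ring); field.
Qed.

Ltac herm_known :=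
  idtac; match goal with
  | |- is_derive (fun t => herm ?k t) ?x _ => exact (is_derive_herm k x)
  | |- is_derive (fun t => herm_der ?k t) ?x _ => exact (is_derive_herm_der k x)
  | |- is_derive (fun t => exp (- t ^ 2)) ?x _ => exact (is_derive_gauss x)
  | |- is_derive (fun t => exp (- t ^ 2 / 2)) ?x _ => exact (is_derive_half_gauss x)
  end.

Ltac herm_known_dominated :=
  idtac; match goal with
  | |- poly_dominated _ (fun t => herm ?k t) => exact (poly_dominated_herm k)
  | |- poly_dominated _ (fun t => herm_der ?k t) => exact (poly_dominated_herm_der k)
  | |- poly_dominated _ (fun t => exp (- t ^ 2 / 2)) => exact poly_dominated_half_gauss
  end.

Lemma Derive_n_gauss (k : nat) (x : R) :
  Derive_n (fun t => exp (- t ^ 2)) k x = (-1) ^ k * herm k x * exp (- x ^ 2).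
Proof.
  revert x; induction k as [|k IH]; intro x; [simpl; ring|].
  change (Derive (Derive_n (fun t => exp (- t ^ 2)) k) x
          = (-1) ^ S k * herm (S k) x * exp (- x ^ 2)).
  rewrite (Derive_ext _ _ x IH).
  apply is_derive_unique.
  derive_tac herm_known.
  rewrite herm_S; simpl; ring.
Qed.

Lemma hermite_poly_herm (k : nat) (x : R) : hermite_poly k x = herm k x.
Proof.
  unfold hermite_poly; rewrite Derive_n_gauss.
  replace ((-1) ^ k * exp (x ^ 2) * ((-1) ^ k * herm k x * exp (- x ^ 2)))
    with (((-1) * (-1)) ^ k * exp (x ^ 2 + - x ^ 2) * herm k x)
    by (rewrite Rpow_mult_distr, exp_plus; ring).
  replace (x ^ 2 + - x ^ 2) with 0 by ring.
  replace (-1 * -1) with 1 by ring.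
  rewrite pow1, exp_0; ring.
Qed.

Definition hermite_cst (k : nat) : R := / sqrt (2 ^ k * INR (fact k) * sqrt PI).

Definition eigenvalue (k : nat) : R := 2 * INR k + 1.

Definition hermite_der (k : nat) (x : R) : R :=
  hermite_cst k * (herm_der k x - x * herm k x) * exp (- x ^ 2 / 2).

Lemma hermite_fun_herm (k : nat) (x : R) :
  hermite_fun k x = hermite_cst k * herm k x * exp (- x ^ 2 / 2).
Proof. unfold hermite_fun; now rewrite hermite_poly_herm. Qed.

Lemma is_derive_hermite_fun (k : nat) (x : R) : is_derive (hermite_fun k) x (hermite_der k x).
Proof.
  apply (is_derive_ext (fun t => hermite_cst k * herm k t * exp (- t ^ 2 / 2)));
    [intro; symmetry; apply hermite_fun_herm|].
  derive_tac herm_known.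
  unfold hermite_der; ring.
Qed.

Lemma is_derive_hermite_der (k : nat) (x : R) :
  is_derive (hermite_der k) x ((x ^ 2 - eigenvalue k) * hermite_fun k x).
Proof.
  unfold hermite_der at 1.
  derive_tac herm_known.
  rewrite hermite_fun_herm; unfold eigenvalue; ring.
Qed.

Lemma hermite_norm_pos (k : nat) : 0 < 2 ^ k * INR (fact k) * sqrt PI.
Proof.
  apply Rmult_lt_0_compat; [apply Rmult_lt_0_compat|].
  - apply pow_lt; lra.
  - apply lt_0_INR, lt_O_fact.
  - apply sqrt_lt_R0, PI_RGT_0.
Qed.

Lemma hermite_cst_pos (k : nat) : 0 < hermite_cst k.
Proof. apply Rinv_0_lt_compat, sqrt_lt_R0, hermite_norm_pos. Qed.

Lemma hermite_cst_sq (k : nat) : hermite_cst k ^ 2 = / (2 ^ k * INR (fact k) * sqrt PI).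
Proof.
  unfold hermite_cst; rewrite pow_inv, <- Rsqr_pow2, Rsqr_sqrt; [reflexivity|].
  apply Rlt_le, hermite_norm_pos.
Qed.

Lemma hermite_cst_S (k : nat) : 2 * INR (S k) * hermite_cst (S k) ^ 2 = hermite_cst k ^ 2.
Proof.
  rewrite !hermite_cst_sq; change (fact (S k)) with (S k * fact k)%nat.
  rewrite mult_INR; simpl pow.
  assert (0 < INR (fact k)) by apply lt_0_INR, lt_O_fact.
  assert (0 < sqrt PI) by apply sqrt_lt_R0, PI_RGT_0.
  assert (0 < INR (S k)) by apply lt_0_INR, Nat.lt_0_succ.
  assert (0 < 2 ^ k) by (apply pow_lt; lra).
  field; repeat split; lra.
Qed.

Lemma hermite_ladder (k : nat) (x : R) :
  (x * hermite_fun k x - hermite_der k x) ^ 2 = 2 * INR (S k) * hermite_fun (S k) x ^ 2.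
Proof.
  rewrite !hermite_fun_herm; unfold hermite_der.
  transitivity (hermite_cst k ^ 2 * (herm (S k) x * exp (- x ^ 2 / 2)) ^ 2);
    [rewrite herm_S; ring|].
  rewrite <- (hermite_cst_S k); ring.
Qed.

Lemma poly_dominated_hermite_fun (k : nat) : poly_dominated half_gauss (hermite_fun k).
Proof.
  apply (poly_dominated_ext _ (fun t => hermite_cst k * herm k t * exp (- t ^ 2 / 2)));
    [intro; symmetry; apply hermite_fun_herm|].
  dominated_tac herm_known_dominated.
Qed.

Lemma poly_dominated_hermite_der (k : nat) : poly_dominated half_gauss (hermite_der k).
Proof.
  unfold hermite_der.
  dominated_tac herm_known_dominated.
Qed.

Lemma poly_dominated_hermite_sq (k : nat) :
  poly_dominated gauss (fun x => hermite_fun k x ^ 2).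
Proof.
  apply (poly_dominated_ext _ (fun x => hermite_fun k x * hermite_fun k x)); [intro; ring|].
  apply poly_dominated_gauss_mult; apply poly_dominated_hermite_fun.
Qed.

Lemma poly_dominated_hermite_der_sq (k : nat) :
  poly_dominated gauss (fun x => hermite_der k x ^ 2).
Proof.
  apply (poly_dominated_ext _ (fun x => hermite_der k x * hermite_der k x)); [intro; ring|].
  apply poly_dominated_gauss_mult; apply poly_dominated_hermite_der.
Qed.

Lemma poly_dominated_hermite_fun_der (k : nat) :
  poly_dominated gauss (fun x => hermite_fun k x * hermite_der k x).
Proof.
  apply poly_dominated_gauss_mult;
    [apply poly_dominated_hermite_fun | apply poly_dominated_hermite_der].
Qed.

Ltac hermite_known :=
  idtac; match goal with
  | |- is_derive (fun t => hermite_fun ?k t) ?x _ => exact (is_derive_hermite_fun k x)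
  | |- is_derive (fun t => hermite_der ?k t) ?x _ => exact (is_derive_hermite_der k x)
  end.

Ltac hermite_derive := derive_tac hermite_known.

Ltac hermite_continuous :=
  apply (ex_derive_continuous (V := R_NormedModule)); eexists; hermite_derive; reflexivity.

Ltac hermite_dominated :=
  dominated_tac ltac:(idtac; match goal with
    | |- poly_dominated _ (fun t => hermite_fun ?k t ^ 2) => exact (poly_dominated_hermite_sq k)
    | |- poly_dominated _ (fun t => hermite_der ?k t ^ 2) => exact (poly_dominated_hermite_der_sq k)
    | |- poly_dominated _ (fun t => hermite_fun ?k t * hermite_der ?k t) =>
        exact (poly_dominated_hermite_fun_der k)
    end).

Definition admissible_weight (W : R -> R) : Prop :=
  (forall x, continuous W x) /\ (forall x, 0 <= W x) /\ poly_dominated (fun _ => 1) W.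

Definition hermite_weighted (k : nat) (W : R -> R) : R :=
  RInt_gen (fun x => hermite_fun k x ^ 2 * W x) minf pinf.

Lemma continuous_hermite_weighted (k : nat) (W : R -> R) (x : R) :
  continuous W x -> continuous (fun x => hermite_fun k x ^ 2 * W x) x.
Proof.
  intro HW; apply (continuous_mult (fun x => hermite_fun k x ^ 2) W);
    [hermite_continuous | exact HW].
Qed.

Lemma is_RInt_gen_hermite_weighted (k : nat) (W : R -> R) : admissible_weight W ->
  is_RInt_gen (fun x => hermite_fun k x ^ 2 * W x) minf pinf (hermite_weighted k W).
Proof.
  intros [Hc [Hpos Hdom]].
  assert (Hf : poly_dominated gauss (fun x => hermite_fun k x ^ 2 * W x)).
  { apply (poly_dominated_ext _ (fun x => W x * hermite_fun k x ^ 2)); [intro; ring|].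
    apply poly_dominated_mult_poly; [exact Hdom | apply poly_dominated_hermite_sq]. }
  destruct (poly_dominated_gauss_inv_sq _ Hf) as [B HB].
  apply (is_RInt_gen_inv_sq_bound _ B).
  - intro x; apply continuous_hermite_weighted, Hc.
  - intro x; assert (H0 : 0 <= hermite_fun k x ^ 2 * W x)
      by (apply Rmult_le_pos; [apply pow2_ge_0 | apply Hpos]).
    split; [exact H0|]; rewrite <- (Rabs_right _ (Rle_ge _ _ H0)); apply HB.
Qed.

Lemma admissible_weight_even_pow (n : nat) : admissible_weight (fun x => x ^ (2 * n)).
Proof.
  split; [|split].
  - intro x; apply (ex_derive_continuous (V := R_NormedModule)); auto_derive; easy.
  - intro x; rewrite pow_mult; apply pow_le, pow2_ge_0.
  - apply poly_dominated_pow.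
Qed.

Definition moment (k n : nat) : R := hermite_weighted k (fun x => x ^ (2 * n)).

Lemma is_RInt_gen_moment (k n : nat) :
  is_RInt_gen (fun x => hermite_fun k x ^ 2 * x ^ (2 * n)) minf pinf (moment k n).
Proof. apply is_RInt_gen_hermite_weighted, admissible_weight_even_pow. Qed.

Lemma is_RInt_gen_moment_0 (k : nat) :
  is_RInt_gen (fun x => hermite_fun k x ^ 2) minf pinf (moment k 0).
Proof.
  apply (is_RInt_gen_ext (fun x => hermite_fun k x ^ 2 * x ^ (2 * 0)));
    [apply filter_forall; intros; simpl; ring | apply is_RInt_gen_moment].
Qed.

Lemma is_RInt_gen_quartic_moments (k : nat) (a0 a1 a2 : R) :
  is_RInt_gen (fun x => hermite_fun k x ^ 2 * (a0 + a1 * x ^ 2 + a2 * x ^ 4)) minf pinf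
    (a0 * moment k 0 + a1 * moment k 1 + a2 * moment k 2).
Proof.
  replace (a0 * moment k 0 + a1 * moment k 1 + a2 * moment k 2)
    with (1 * (a0 * moment k 0 + a1 * moment k 1) + a2 * moment k 2) by ring.
  apply (is_RInt_gen_ext (fun x => 1 * (a0 * (hermite_fun k x ^ 2 * x ^ (2 * 0))
                                      + a1 * (hermite_fun k x ^ 2 * x ^ (2 * 1)))
                                   + a2 * (hermite_fun k x ^ 2 * x ^ (2 * 2)))).
  { apply filter_forall; intros ab x _; simpl; ring. }
  apply is_RInt_gen_lin; [apply is_RInt_gen_lin|]; apply is_RInt_gen_moment.
Qed.

Lemma moment_ge0 (k n : nat) : 0 <= moment k n.
Proof.
  apply (is_RInt_gen_ge0 _ _ (is_RInt_gen_moment k n)); intro x.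
  apply Rmult_le_pos; [apply pow2_ge_0 | rewrite pow_mult; apply pow_le, pow2_ge_0].
Qed.

Lemma moment_1 (k : nat) : moment k 1 = eigenvalue k / 2 * moment k 0.
Proof.
  enough (H : is_RInt_gen
                (fun x => hermite_fun k x ^ 2 * (2 * eigenvalue k + -4 * x ^ 2 + 0 * x ^ 4))
                minf pinf 0).
  { pose proof (is_RInt_gen_uniq _ _ _ H (is_RInt_gen_quartic_moments k _ _ _)); lra. }
  apply (is_RInt_gen_derive_gauss
           (fun x => x * hermite_der k x ^ 2 - x ^ 3 * hermite_fun k x ^ 2
                     + eigenvalue k * x * hermite_fun k x ^ 2 - hermite_fun k x * hermite_der k x)).
  - intro x; hermite_derive; cbn [INR]; ring.
  - intro x; hermite_continuous.
  - hermite_dominated.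
Qed.

Lemma moment_2 (k : nat) : moment k 2 = 3 * (eigenvalue k ^ 2 + 1) / 8 * moment k 0.
Proof.
  enough (H : is_RInt_gen
                (fun x => hermite_fun k x ^ 2 * (-3 + -6 * eigenvalue k * x ^ 2 + 8 * x ^ 4))
                minf pinf 0).
  { pose proof (is_RInt_gen_uniq _ _ _ H (is_RInt_gen_quartic_moments k _ _ _)).
    rewrite moment_1 in *; lra. }
  apply (is_RInt_gen_derive_gauss
           (fun x => 3 * x ^ 2 * (hermite_fun k x * hermite_der k x) - 3 * x * hermite_fun k x ^ 2
                     - x ^ 3 * hermite_der k x ^ 2 + x ^ 5 * hermite_fun k x ^ 2
                     - eigenvalue k * x ^ 3 * hermite_fun k x ^ 2)).
  - intro x; hermite_derive; cbn [INR]; ring.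
  - intro x; hermite_continuous.
  - hermite_dominated.
Qed.

Lemma moment_0_S (k : nat) : moment (S k) 0 = moment k 0.
Proof.
  set (c := 2 * INR (S k)).
  assert (Hc : 0 < c) by (unfold c; rewrite S_INR; pose proof (pos_INR k); lra).
  enough (H : is_RInt_gen (fun x => c * hermite_fun (S k) x ^ 2 + - c * hermite_fun k x ^ 2)
                minf pinf 0).
  { assert (Hlin := is_RInt_gen_lin _ _ c (- c) _ _
                      (is_RInt_gen_moment_0 (S k)) (is_RInt_gen_moment_0 k)).
    pose proof (is_RInt_gen_uniq _ _ _ H Hlin); nra. }
  apply (is_RInt_gen_derive_gauss
           (fun x => hermite_fun k x * hermite_der k x - x * hermite_fun k x ^ 2)).
  - intro x; hermite_derive.
    unfold c; rewrite <- hermite_ladder; unfold eigenvalue; rewrite (S_INR k); cbn [INR]; ring.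
  - intro x; hermite_continuous.
  - hermite_dominated.
Qed.

Lemma moment_0_const (k : nat) : moment k 0 = moment 0 0.
Proof. induction k as [|k IH]; [reflexivity | now rewrite moment_0_S]. Qed.

Lemma moment_0_pos : 0 < moment 0 0.
Proof.
  apply Rlt_le_trans with (RInt (fun x => hermite_fun 0 x ^ 2) 0 1).
  - apply RInt_gt_0; [lra| |intros; hermite_continuous].
    intros x _; apply pow_lt; rewrite hermite_fun_herm; cbn [herm]; rewrite Rmult_1_r.
    apply Rmult_lt_0_compat; [apply hermite_cst_pos | apply exp_pos].
  - apply (RInt_le_is_RInt_gen _ _ _ _ (is_RInt_gen_moment_0 0)); [intro; apply pow2_ge_0 | | lra].
    intro; hermite_continuous.
Qed.

(** * The energy *)

Definition energy (k : nat) (x : R) : R :=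
  hermite_der k x ^ 2 + (eigenvalue k - x ^ 2) * hermite_fun k x ^ 2.

Lemma is_derive_energy (k : nat) (x : R) : is_derive (energy k) x (- 2 * x * hermite_fun k x ^ 2).
Proof. unfold energy; hermite_derive; cbn [INR]; ring. Qed.

Lemma poly_dominated_energy (k : nat) : poly_dominated gauss (energy k).
Proof. unfold energy; hermite_dominated. Qed.

Lemma is_RInt_gen_hermite_abs (k : nat) :
  is_RInt_gen (fun x => hermite_fun k x ^ 2 * (2 * Rabs x)) minf pinf (2 * energy k 0).
Proof.
  destruct (poly_dominated_gauss_inv_sq _ (poly_dominated_energy k)) as [B HB].
  replace (2 * energy k 0) with (plus (energy k 0 - 0) (0 - - energy k 0))
    by (unfold plus; simpl; ring).
  apply (is_RInt_gen_Chasles _ 0 (energy k 0 - 0) (0 - - energy k 0)).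
  - apply (is_RInt_gen_ext (fun x => - 2 * x * hermite_fun k x ^ 2)).
    + apply (Filter_prod _ _ _ (fun a => a < 0) (fun b => b = 0)); [now exists 0 | reflexivity|].
      intros a b Ha -> x [_ Hx]; simpl in Hx; rewrite Rmax_right in Hx by lra.
      (* the equation lives in Coquelicot's normed-module carrier, which [ring] ignores *)
      match goal with |- ?u = ?v => change (@eq R u v) end.
      rewrite Rabs_left by lra; ring.
    + apply (is_RInt_gen_derive (energy k) _ 0 (energy k 0)).
      * apply is_derive_energy.
      * intro; hermite_continuous.
      * apply (filterlim_inv_sq_bound B); auto.
      * apply (filterlim_at_point (energy k)).
  - apply (is_RInt_gen_ext (fun x => 2 * x * hermite_fun k x ^ 2)).
    + apply (Filter_prod _ _ _ (fun a => a = 0) (fun b => 0 < b)); [reflexivity | now exists 0|].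
      intros a b -> Hb x [Hx _]; simpl in Hx; rewrite Rmin_left in Hx by lra.
      match goal with |- ?u = ?v => change (@eq R u v) end.
      rewrite Rabs_right by lra; ring.
    + apply (is_RInt_gen_derive (fun x => - energy k x) _ (- energy k 0) 0).
      * intro x; eapply is_derive_eq; [apply (is_derive_opp (energy k)), is_derive_energy|].
        unfold opp; simpl; ring.
      * intro x; hermite_continuous.
      * apply (filterlim_at_point (fun x => - energy k x)).
      * apply (filterlim_inv_sq_bound B); auto; intro x; rewrite Rabs_Ropp; apply HB.
Qed.

Lemma energy_le_energy_0 (k : nat) (x : R) : energy k x <= energy k 0.
Proof.
  destruct (MVT_gen (energy k) 0 x (fun t => - 2 * t * hermite_fun k t ^ 2))
    as [c [Hc Hmvt]].
  - intros t _; apply is_derive_energy.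
  - intros t _; apply continuity_pt_filterlim, (ex_derive_continuous (V := R_NormedModule)).
    eexists; apply is_derive_energy.
  - assert (0 <= c * x) by (destruct (Rle_dec 0 x);
      [rewrite Rmin_left, Rmax_right in Hc | rewrite Rmin_right, Rmax_left in Hc]; nra).
    pose proof (pow2_ge_0 (hermite_fun k c)); nra.
Qed.

Lemma energy_ge_hermite_product (k : nat) (x : R) :
  x ^ 2 + 1 <= eigenvalue k -> 2 * Rabs (hermite_fun k x * hermite_der k x) <= energy k x.
Proof.
  intro Hx; unfold energy.
  pose proof (pow2_ge_0 (hermite_fun k x)).
  pose proof (pow2_ge_0 (Rabs (hermite_fun k x) - Rabs (hermite_der k x))).
  rewrite Rabs_mult, <- (pow2_abs (hermite_fun k x)), <- (pow2_abs (hermite_der k x)) in *; nra.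
Qed.

Lemma energy_virial (k : nat) (c a b : R) : a <= b ->
  (b - c) * energy k b - hermite_fun k b * hermite_der k b
  - ((a - c) * energy k a - hermite_fun k a * hermite_der k a)
  <= (2 * eigenvalue k + c ^ 2 / 4) * RInt (fun x => hermite_fun k x ^ 2) a b.
Proof.
  intro Hab.
  set (D := fun x => (x - c) * energy k x - hermite_fun k x * hermite_der k x).
  set (d := fun x => (2 * eigenvalue k - 4 * x ^ 2 + 2 * c * x) * hermite_fun k x ^ 2).
  assert (HD : forall x, is_derive D x (d x)).
  { intro x; unfold D, d, energy; hermite_derive; cbn [INR]; ring. }
  assert (Hd : forall x, continuous d x) by (intro; unfold d; hermite_continuous).
  change (D b - D a <= (2 * eigenvalue k + c ^ 2 / 4) * RInt (fun x => hermite_fun k x ^ 2) a b).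
  rewrite <- (is_RInt_unique d a b (D b - D a)) by (apply (is_RInt_derive D d); auto).
  rewrite <- RInt_Rmult by (apply ex_RInt_cont; intro; hermite_continuous).
  apply RInt_le; auto; try (apply ex_RInt_cont; auto); [intro; hermite_continuous|].
  intros x _; unfold d, scal; simpl; unfold mult; simpl.
  pose proof (pow2_ge_0 (hermite_fun k x)); pose proof (pow2_ge_0 (2 * x - c / 2)); nra.
Qed.

Lemma energy_0_le (k : nat) : 1 <= INR k ->
  energy k 0 <= (2 * eigenvalue k + 1 / 4) * RInt (fun x => hermite_fun k x ^ 2) (-1) 1.
Proof.
  intro Hk.
  assert (Hr := energy_virial k 1 0 1 ltac:(lra)).
  assert (Hl := energy_virial k (-1) (-1) 0 ltac:(lra)).
  assert (Hp := energy_ge_hermite_product k 1 ltac:(unfold eigenvalue; lra)).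
  assert (Hm := energy_ge_hermite_product k (-1) ltac:(unfold eigenvalue; lra)).
  pose proof (energy_le_energy_0 k 1); pose proof (energy_le_energy_0 k (-1)).
  pose proof (Rle_abs (hermite_fun k 1 * hermite_der k 1)).
  pose proof (Rle_abs (- (hermite_fun k (-1) * hermite_der k (-1)))); rewrite Rabs_Ropp in *.
  rewrite <- (RInt_Chasles _ (-1) 0 1) by (apply ex_RInt_cont; intro; hermite_continuous).
  change plus with Rplus; lra.
Qed.

(** * Lower bounds *)

Lemma hermite_weighted_ge_quartic (k : nat) (W : R -> R) (a0 a1 a2 : R) : admissible_weight W ->
  (forall x, a0 + a1 * x ^ 2 + a2 * x ^ 4 <= W x) ->
  a0 * moment k 0 + a1 * moment k 1 + a2 * moment k 2 <= hermite_weighted k W.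
Proof.
  intros HW Hle.
  apply (is_RInt_gen_le _ _ _ _ (is_RInt_gen_quartic_moments k a0 a1 a2)
           (is_RInt_gen_hermite_weighted k W HW)).
  intro x; apply Rmult_le_compat_l; [apply pow2_ge_0 | apply Hle].
Qed.

Lemma hermite_weighted_ge_RInt (k : nat) (W : R -> R) (c d : R) : admissible_weight W -> c <= d ->
  RInt (fun x => hermite_fun k x ^ 2 * W x) c d <= hermite_weighted k W.
Proof.
  intros HW Hcd; pose proof HW as [Hc [Hpos _]].
  apply (RInt_le_is_RInt_gen _ _ _ _ (is_RInt_gen_hermite_weighted k W HW)); auto.
  - intro x; apply Rmult_le_pos; [apply pow2_ge_0 | apply Hpos].
  - intro x; apply continuous_hermite_weighted, Hc.
Qed.

Lemma hermite_weighted_concentration (k : nat) (W : R -> R) (W0 : R) :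
  1 <= INR k -> admissible_weight W -> 0 <= W0 ->
  (forall x, INR k / 2 <= x ^ 2 -> W0 <= W x) -> 16 / 49 * W0 * moment k 0 <= hermite_weighted k W.
Proof.
  intros Hk HW HW0 Hout.
  set (K := INR k) in Hk, Hout |- *.
  assert (HK2 : 0 < K ^ 2) by nra.
  set (c := 16 / 49 * W0 / K ^ 2).
  assert (Hc : 0 <= c)
    by (unfold c; apply Rmult_le_pos; [lra | apply Rlt_le, Rinv_0_lt_compat, HK2]).
  eapply Rle_trans;
    [|apply (hermite_weighted_ge_quartic k W (- 2 * K ^ 2 * c) (9 * K / 2 * c) (- c) HW)].
  - rewrite moment_2, moment_1; unfold eigenvalue; fold K; pose proof (moment_ge0 k 0).
    replace (-2 * K ^ 2 * c * moment k 0 + 9 * K / 2 * c * (((2 * K + 1)) / 2 * moment k 0)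
             + - c * (3 * ((2 * K + 1) ^ 2 + 1) / 8 * moment k 0))
      with (c * moment k 0 * (K ^ 2 + 3 / 4 * K - 3 / 4)) by field.
    replace (16 / 49 * W0 * moment k 0) with (c * moment k 0 * K ^ 2) by (unfold c; field; lra).
    apply Rmult_le_compat_l; [apply Rmult_le_pos|]; lra.
  - intro x; pose proof (proj1 (proj2 HW) x) as HWx.
    replace (-2 * K ^ 2 * c + 9 * K / 2 * c * x ^ 2 + - c * x ^ 4)
      with (c * ((x ^ 2 - K / 2) * (4 * K - x ^ 2))) by field.
    destruct (Rle_dec (K / 2) (x ^ 2)) as [Hx|Hx].
    + specialize (Hout x Hx).
      assert (c * ((x ^ 2 - K / 2) * (4 * K - x ^ 2)) <= c * (49 / 16 * K ^ 2))
        by (apply Rmult_le_compat_l; [|pose proof (pow2_ge_0 (x ^ 2 - 9 * K / 4))]; nra).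
      replace (c * (49 / 16 * K ^ 2)) with W0 in * by (unfold c; field; lra); lra.
    + assert (0 <= c * ((K / 2 - x ^ 2) * (4 * K - x ^ 2))) by (apply Rmult_le_pos; nra); nra.
Qed.

Lemma hermite_weighted_bulk (k : nat) (W : R -> R) (W0 : R) :
  1 <= INR k -> admissible_weight W -> 0 <= W0 ->
  (forall x, x ^ 2 <= 4 * INR k -> W0 <= W x) -> W0 / 2 * moment k 0 <= hermite_weighted k W.
Proof.
  intros Hk HW HW0 Hin.
  set (K := INR k) in Hk, Hin |- *.
  eapply Rle_trans; [|apply (hermite_weighted_ge_quartic k W W0 (- W0 / (4 * K)) 0 HW)].
  - rewrite moment_1; unfold eigenvalue; fold K; pose proof (moment_ge0 k 0).
    replace (W0 * moment k 0 + - W0 / (4 * K) * ((2 * K + 1) / 2 * moment k 0) + 0 * moment k 2)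
      with (W0 * moment k 0 * (3 / 4 - 1 / (8 * K))) by (field; lra).
    assert (1 / (8 * K) <= 1 / 8) by (apply Rmult_le_compat_l, Rinv_le_contravar; lra).
    assert (0 <= W0 * moment k 0) by (apply Rmult_le_pos; lra).
    nra.
  - intro x; pose proof (proj1 (proj2 HW) x) as HWx.
    replace (W0 + - W0 / (4 * K) * x ^ 2 + 0 * x ^ 4) with (W0 * (1 - x ^ 2 / (4 * K)))
      by (field; lra).
    destruct (Rle_dec (x ^ 2) (4 * K)) as [Hx|Hx].
    + specialize (Hin x Hx).
      enough (W0 * (1 - x ^ 2 / (4 * K)) <= W0 * 1) by lra.
      apply Rmult_le_compat_l; [lra|].
      enough (0 <= x ^ 2 / (4 * K)) by lra.
      apply Rmult_le_pos; [apply pow2_ge_0 | apply Rlt_le, Rinv_0_lt_compat; lra].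
    + enough (W0 * (1 - x ^ 2 / (4 * K)) <= W0 * 0) by lra.
      apply Rmult_le_compat_l; [lra|].
      enough (1 <= x ^ 2 / (4 * K)) by lra.
      apply Rmult_le_reg_r with (4 * K); [lra|].
      unfold Rdiv; rewrite Rmult_assoc, Rinv_l; lra.
Qed.

Lemma admissible_weight_abs : admissible_weight (fun x => 2 * Rabs x).
Proof.
  split; [|split; [intro; pose proof (Rabs_pos x); lra|]].
  - intro x; apply (continuous_scal_r 2 Rabs), continuous_Rabs.
  - exists 2, 1%nat; split; [lra|]; intro x.
    rewrite Rabs_mult, Rabs_Rabsolu, Rabs_right by lra; simpl; pose proof (Rabs_pos x); lra.
Qed.

Lemma admissible_weight_Rpower (a : R) : admissible_weight (fun x => Rpower (1 + Rabs x) a).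
Proof.
  split; [|split; [intro; apply Rlt_le, exp_pos | apply poly_dominated_Rpower]].
  intro x; apply (continuous_comp (fun t => 1 + Rabs t) (fun y => Rpower y a)).
  - apply (continuous_plus (fun _ => 1) Rabs); [apply continuous_const | apply continuous_Rabs].
  - apply (ex_derive_continuous (V := R_NormedModule)); eexists; apply is_derive_Reals.
    apply derivable_pt_lim_power; pose proof (one_le_1_abs x); lra.
Qed.

Lemma Rpower_sq_half (y e : R) : 0 < y -> Rpower y e = Rpower (y ^ 2) (e / 2).
Proof.
  intro Hy; rewrite <- (Rpower_pow 2 y Hy), Rpower_mult; f_equal; simpl; field.
Qed.

Lemma Rpower_neg_half (x : R) : 0 < x -> Rpower x (- (1 / 2)) = / sqrt x.
Proof.
  intro Hx; rewrite Rpower_Ropp, <- Rpower_sqrt by exact Hx; do 2 f_equal; field.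
Qed.

Lemma hermite_weighted_pos_power (a : R) : 0 <= a ->
  exists c, 0 < c /\ forall k, 1 <= INR k ->
    c * Rpower (INR k) (a / 2) <= hermite_weighted k (fun x => Rpower (1 + Rabs x) a).
Proof.
  intro Ha; exists (16 / 49 * Rpower (/ 2) (a / 2) * moment 0 0).
  split; [pose proof moment_0_pos; pose proof (exp_pos (a / 2 * ln (/ 2))); unfold Rpower; nra|].
  intros k Hk.
  eapply Rle_trans;
    [|apply (hermite_weighted_concentration k _ (Rpower (INR k / 2) (a / 2)) Hk
               (admissible_weight_Rpower a) (Rlt_le _ _ (exp_pos _)))].
  - rewrite (moment_0_const k), <- (Rpower_mult_distr (INR k) (/ 2)) by lra; right; ring.
  - intros x Hx; rewrite (Rpower_sq_half (1 + Rabs x)) by (pose proof (one_le_1_abs x); lra).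
    apply Rle_Rpower_l; [lra | split; [lra|]].
    rewrite <- (pow2_abs x) in Hx; pose proof (Rabs_pos x); nra.
Qed.

Lemma hermite_weighted_neg_power (a : R) : 0 <= a ->
  exists c, 0 < c /\ forall k, 1 <= INR k ->
    c * Rpower (INR k) (- a / 2) <= hermite_weighted k (fun x => Rpower (1 + Rabs x) (- a)).
Proof.
  intro Ha; exists (Rpower 10 (- a / 2) * moment 0 0 / 2).
  split; [pose proof moment_0_pos; pose proof (exp_pos (- a / 2 * ln 10)); unfold Rpower; nra|].
  intros k Hk.
  eapply Rle_trans;
    [|apply (hermite_weighted_bulk k _ (Rpower (10 * INR k) (- a / 2)) Hk
               (admissible_weight_Rpower (- a)) (Rlt_le _ _ (exp_pos _)))].
  - rewrite (moment_0_const k), <- (Rpower_mult_distr 10 (INR k)) by lra; right; field.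
  - intros x Hx; rewrite (Rpower_sq_half (1 + Rabs x)) by (pose proof (one_le_1_abs x); lra).
    replace (- a / 2) with (- (a / 2)) by field; rewrite !Rpower_Ropp.
    apply Rinv_le_contravar; [apply exp_pos|].
    apply Rle_Rpower_l; [lra | split; [pose proof (one_le_1_abs x); nra|]].
    rewrite <- (pow2_abs x) in Hx; pose proof (Rabs_pos x); nra.
Qed.

Lemma energy_0_ge (k : nat) : 1 <= INR k -> 8 / 49 * sqrt (INR k) * moment k 0 <= energy k 0.
Proof.
  intro Hk.
  assert (Hs : 0 <= sqrt (INR k) /\ sqrt (INR k) * sqrt (INR k) = INR k)
    by (split; [apply sqrt_pos | apply sqrt_sqrt; lra]).
  enough (16 / 49 * sqrt (INR k) * moment k 0 <= 2 * energy k 0) by lra.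
  rewrite <- (is_RInt_gen_unique _ _ (is_RInt_gen_hermite_abs k)).
  apply (hermite_weighted_concentration k _ _ Hk admissible_weight_abs); [lra|].
  intros x Hx; rewrite <- (pow2_abs x) in Hx; pose proof (Rabs_pos x); nra.
Qed.

Lemma hermite_central_mass (k : nat) : 1 <= INR k ->
  8 / 343 * moment k 0 / sqrt (INR k) <= RInt (fun x => hermite_fun k x ^ 2) (-1) 1.
Proof.
  intro Hk; set (J := RInt (fun x => hermite_fun k x ^ 2) (-1) 1).
  assert (HJ : 0 <= J) by (apply RInt_ge_0; [lra | apply ex_RInt_cont; intro; hermite_continuous
                                            | intros; apply pow2_ge_0]).
  assert (Hs : 0 < sqrt (INR k) /\ sqrt (INR k) * sqrt (INR k) = INR k)
    by (split; [apply sqrt_lt_R0 | apply sqrt_sqrt]; lra).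
  pose proof (energy_0_ge k Hk) as Hlow; pose proof (energy_0_le k Hk) as Hup.
  unfold eigenvalue in Hup; fold J in Hup.
  assert (H7 : (2 * (2 * INR k + 1) + 1 / 4) * J <= sqrt (INR k) * (7 * sqrt (INR k) * J)) by nra.
  apply Rmult_le_reg_r with (sqrt (INR k)); [lra|].
  unfold Rdiv; rewrite Rmult_assoc, Rinv_l, Rmult_1_r by lra.
  apply Rmult_le_reg_l with (sqrt (INR k)); [lra|]; nra.
Qed.

Lemma hermite_weighted_ge_central_mass (k : nat) (a : R) : 0 <= a ->
  Rpower 2 (- a) * RInt (fun x => hermite_fun k x ^ 2) (-1) 1
  <= hermite_weighted k (fun x => Rpower (1 + Rabs x) (- a)).
Proof.
  intro Ha; pose proof (admissible_weight_Rpower (- a)) as HW.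
  eapply Rle_trans; [|apply (hermite_weighted_ge_RInt k _ (-1) 1 HW); lra].
  rewrite <- RInt_Rmult by (apply ex_RInt_cont; intro; hermite_continuous).
  apply RInt_le; [lra | apply ex_RInt_cont; intro; hermite_continuous
                 | apply ex_RInt_cont; intro; apply continuous_hermite_weighted, HW|].
  intros x Hx; rewrite Rmult_comm; apply Rmult_le_compat_l; [apply pow2_ge_0|].
  rewrite !Rpower_Ropp; apply Rinv_le_contravar; [apply exp_pos|].
  apply Rle_Rpower_l; [exact Ha|]; pose proof (Rabs_pos x).
  assert (Rabs x <= 1) by (apply Rabs_le; lra); lra.
Qed.

Lemma hermite_weighted_neg_power_sqrt (a : R) : 0 <= a ->
  exists c, 0 < c /\ forall k, 1 <= INR k ->
    c * Rpower (INR k) (- (1 / 2)) <= hermite_weighted k (fun x => Rpower (1 + Rabs x) (- a)).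
Proof.
  intro Ha; exists (Rpower 2 (- a) * (8 / 343) * moment 0 0).
  assert (H2a : 0 < Rpower 2 (- a)) by apply exp_pos.
  split; [pose proof moment_0_pos; nra|]; intros k Hk.
  assert (Hs : 0 < sqrt (INR k)) by (apply sqrt_lt_R0; lra).
  eapply Rle_trans; [|apply hermite_weighted_ge_central_mass, Ha].
  rewrite <- (moment_0_const k), Rpower_neg_half by lra.
  replace (Rpower 2 (- a) * (8 / 343) * moment k 0 * / sqrt (INR k))
    with (Rpower 2 (- a) * (8 / 343 * moment k 0 / sqrt (INR k))) by (field; lra).
  apply Rmult_le_compat_l; [lra | apply hermite_central_mass, Hk].
Qed.

Theorem lemma4p9 (alpha : R) (halpha : 0 <= alpha) :
  exists C : R, 0 < C /\
  exists N : nat, forall k : nat, (N <= k)%nat ->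
    (exists I : R,
       is_RInt_gen (fun x => hermite_fun k x ^ 2 * Rpower (1 + Rabs x) alpha)
         (Rbar_locally m_infty) (Rbar_locally p_infty) I
       /\ C * Rpower (INR k) (alpha / 2) <= I)
    /\
    (exists I : R,
       is_RInt_gen (fun x => hermite_fun k x ^ 2 * Rpower (1 + Rabs x) (- alpha))
         (Rbar_locally m_infty) (Rbar_locally p_infty) I
       /\ C * Rmax (Rpower (INR k) (- alpha / 2)) (Rpower (INR k) (- (1 / 2))) <= I).
Proof.
  destruct (hermite_weighted_pos_power alpha halpha) as [c1 [Hc1 H1]].
  destruct (hermite_weighted_neg_power alpha halpha) as [c2 [Hc2 H2]].
  destruct (hermite_weighted_neg_power_sqrt alpha halpha) as [c3 [Hc3 H3]].
  set (C := Rmin c1 (Rmin c2 c3)).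
  assert (HC : C <= c1 /\ C <= c2 /\ C <= c3).
  { pose proof (Rmin_l c2 c3); pose proof (Rmin_r c2 c3).
    pose proof (Rmin_l c1 (Rmin c2 c3)); pose proof (Rmin_r c1 (Rmin c2 c3)); unfold C; lra. }
  exists C; split; [repeat apply Rmin_glb_lt; assumption|].
  exists 1%nat; intros k Hk; pose proof (le_INR 1 k Hk) as HK.
  split; eexists; (split; [apply is_RInt_gen_hermite_weighted, admissible_weight_Rpower|]).
  - eapply Rle_trans; [|apply (H1 k HK)]; apply Rmult_le_compat_r; [apply Rlt_le, exp_pos | apply HC].
  - apply (Rmax_case _ _ (fun r => C * r <= _)).
    + eapply Rle_trans; [|apply (H2 k HK)]; apply Rmult_le_compat_r; [apply Rlt_le, exp_pos | apply HC].
    + eapply Rle_trans; [|apply (H3 k HK)]; apply Rmult_le_compat_r; [apply Rlt_le, exp_pos | apply HC].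
Qed.
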